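(* There exist a universal constant $c>0$ and a family of weighted graphs, with arbitrarily large number $n$ of vertices, such that (1) all edge weights equal $1/2$; (2) $\mathsf{OPT}^{\mathsf{IR}}=O(1)$; (3) every persuasive binary signaling scheme has cost at least $c\,n$.
   Context: Setting. $V$ is a finite set of $n$ task types and $W=(W_{u,v})_{u,v\in V}$ is a symmetric matrix with entries in $[0,1]$ and $W_{v,v}=1$; edges are pairs $\{u,v\}$, $u\ne v$, with $W_{u,v}>0$, of weight $W_{u,v}$. A vector $\theta\in\mathbb{R}_{\ge0}^V$ is feasible if $W\theta\ge\mathbf 1$ coordinatewise. $\mathsf{OPT}^{\mathsf{IR}}=\min\{\|\theta\|_1:\theta\in[0,1]^V\text{ feasible}\}$. Signaling. There are $n$ agents; the type profile $t$ is a uniformly random bijection $[n]\to V$. A signaling scheme with finite signal space $\Sigma\subset[0,1]$ is a map $\varphi$ assigning to each bijection $t$ a distribution $\varphi(t)$ on $\Sigma^V$; given $t$, $s\sim\varphi(t)$ is drawn and agent $i$ privately receives $s_{t_i}$. For agent $i$, a signal $\theta\in\Sigma$ with $\Pr[s_{t_i}=\theta]>0$ and $x\ge0$, let $Q_i(x\mid\theta)=\mathbb{E}\big[x+\sum_{v'\neq t_i}W_{t_i,v'}s_{v'}\,\big|\,s_{t_i}=\theta\big]$. The scheme is persuasive if for every agent $i$ and every such $\theta$: $Q_i(\theta\mid\theta)\ge1$ and $\theta=\min\{x\ge0:Q_i(x\mid\theta)\ge1\}$. Its cost is $\mathbb{E}[\|s\|_1]$. Binary means $|\Sigma|=2$.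 *)

From HB Require Import structures.
From mathcomp Require Import all_boot all_order all_algebra all_fingroup.
From mathcomp Require Import classical_sets reals.

Set Implicit Arguments. Unset Strict Implicit. Unset Printing Implicit Defensive.
Import Order.TTheory GRing.Theory Num.Theory.
Local Open Scope ring_scope.
Local Open Scope classical_set_scope.

Section Defs.
Variables (R : realType) (n : nat).

Definition half_weight_graph (W : 'M[R]_n) : Prop :=
  (forall u v, W u v = W v u) /\
  (forall u v, 0 <= W u v <= 1) /\
  (forall v, W v v = 1) /\
  (forall u v, u != v -> 0 < W u v -> W u v = 2^-1).

Definition feasible (W : 'M[R]_n) (theta : 'I_n -> R) : Prop :=
  (forall v, 0 <= theta v) /\ (forall u, 1 <= \sum_(v < n) W u v * theta v).

Definition OPT_IR (W : 'M[R]_n) : R :=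
  inf [set x : R | exists theta : 'I_n -> R,
         (forall v, 0 <= theta v <= 1) /\ feasible W theta /\
         x = \sum_(v < n) `|theta v|].

(* A binary signaling scheme: signal space Sigma = {sig 0, sig 1} subset of
   [0,1] with |Sigma| = 2 (sig injective); a signal vector in Sigma^V is
   encoded as s : {ffun 'I_n -> 'I_2} (actual signal of type v is sig (s v)).
   For each type profile t (bijection agents 'I_n -> types 'I_n, i.e. a
   permutation), phi t is a probability distribution on Sigma^V. *)
Definition binary_scheme (sig : 'I_2 -> R)
    (phi : {perm 'I_n} -> {ffun 'I_n -> 'I_2} -> R) : Prop :=
  injective sig /\ (forall k, 0 <= sig k <= 1) /\
  (forall t s, 0 <= phi t s) /\ (forall t, \sum_s phi t s = 1).

Definition jointP (phi : {perm 'I_n} -> {ffun 'I_n -> 'I_2} -> R) t s : R :=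
  phi t s / (#|{perm 'I_n}|)%:R.

Definition prSig phi (i : 'I_n) (k : 'I_2) : R :=
  \sum_(t : {perm 'I_n}) \sum_(s : {ffun 'I_n -> 'I_2})
     (if s (t i) == k then jointP phi t s else 0).

Definition Q (W : 'M[R]_n) (sig : 'I_2 -> R) phi (i : 'I_n) (x : R)
    (k : 'I_2) : R :=
  (\sum_(t : {perm 'I_n}) \sum_(s : {ffun 'I_n -> 'I_2})
     (if s (t i) == k then
        jointP phi t s *
        (x + \sum_(v' < n | v' != t i) W (t i) v' * sig (s v'))
      else 0)) / prSig phi i k.

Definition persuasive (W : 'M[R]_n) (sig : 'I_2 -> R) phi : Prop :=
  forall (i : 'I_n) (k : 'I_2), 0 < prSig phi i k ->
    1 <= Q W sig phi i (sig k) k /\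
    (0 <= sig k /\ 1 <= Q W sig phi i (sig k) k) /\
    (forall x, 0 <= x -> 1 <= Q W sig phi i x k -> sig k <= x).

Definition cost (sig : 'I_2 -> R) phi : R :=
  \sum_(t : {perm 'I_n}) \sum_(s : {ffun 'I_n -> 'I_2})
     jointP phi t s * \sum_(v < n) `|sig (s v)|.

End Defs.

(* The graph has two adjacent hubs and r disjoint copies of K4, every clique
   vertex being joined to both hubs, all edges of weight 1/2.  Putting 1 on
   the hubs is feasible, so OPT^IR <= 2.

   Take a persuasive binary scheme with signals lo < hi, and let D_k(s) be the
   sum, over the types v receiving signal k, of the obedience slack
   sig k - 1 + sum_(v' <> v) W v v' * sig (s v').  Averaging persuasiveness
   over the agents gives E[D_k] >= 0 for both signals, and minimality of the
   signal hi > 0 gives E[D_hi] <= 0.  If lo >= 1/20 the cost is at least n/20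
   outright.  Otherwise, in each regime hi <= 1/5, hi >= 4/5 and
   1/5 < hi < 4/5, some fixed combination w ||s||_1 - l D_hi(s) - m D_lo(s)
   is bounded below for every signal profile s: it splits into a hub term and
   one term per clique, and each is checked by a finite case analysis.  In
   the first two regimes (w = 0) this contradicts the signs of E[D_lo] and
   E[D_hi]; in the third it yields cost >= r/4 >= n/20. *)
From HB Require Import structures.
From mathcomp Require Import all_boot all_order all_algebra all_fingroup.
From mathcomp Require Import classical_sets reals.
From mathcomp Require Import ring lra zify.

Set Implicit Arguments.
Unset Strict Implicit.
Unset Printing Implicit Defensive.

Import Order.TTheory GRing.Theory Num.Theory.
Local Open Scope ring_scope.

Section Persuasion.
Variables (R : realType) (n : nat) (W : 'M[R]_n) (sig : 'I_2 -> R).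
Variable phi : {perm 'I_n} -> {ffun 'I_n -> 'I_2} -> R.

Definition slack (s : {ffun 'I_n -> 'I_2}) (v : 'I_n) : R :=
  sig (s v) - 1 + \sum_(v' < n | v' != v) W v v' * sig (s v').

Definition class_slack (k : 'I_2) (s : {ffun 'I_n -> 'I_2}) : R :=
  \sum_(v < n | s v == k) slack s v.

Definition expect (X : {ffun 'I_n -> 'I_2} -> R) : R :=
  \sum_(t : {perm 'I_n}) \sum_(s : {ffun 'I_n -> 'I_2}) jointP phi t s * X s.

Definition Qnum (i : 'I_n) (x : R) (k : 'I_2) : R :=
  \sum_(t : {perm 'I_n}) \sum_(s : {ffun 'I_n -> 'I_2})
     (if s (t i) == k then
        jointP phi t s * (x + \sum_(v' < n | v' != t i) W (t i) v' * sig (s v'))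
      else 0).

Definition agent_slack (i : 'I_n) (k : 'I_2) : R :=
  \sum_(t : {perm 'I_n}) \sum_(s : {ffun 'I_n -> 'I_2})
     (if s (t i) == k then jointP phi t s * slack s (t i) else 0).

Lemma QE i x k : Q W sig phi i x k = Qnum i x k / prSig phi i k.
Proof. by []. Qed.

Lemma QnumD i x k : Qnum i x k = x * prSig phi i k + Qnum i 0 k.
Proof.
rewrite /Qnum /prSig mulr_sumr -big_split; apply: eq_bigr => t _.
rewrite mulr_sumr -big_split; apply: eq_bigr => s _.
by case: ifP => _ /=; ring.
Qed.

Lemma agent_slackE i k : agent_slack i k = Qnum i (sig k) k - prSig phi i k.
Proof.
rewrite /agent_slack /Qnum /prSig -sumrB; apply: eq_bigr => t _.
rewrite -sumrB; apply: eq_bigr => s _.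
by case: ifP => [/eqP <-|_]; rewrite /slack ?subr0 //; ring.
Qed.

Lemma sum_agent_slack k : \sum_(i < n) agent_slack i k = expect (class_slack k).
Proof.
rewrite /agent_slack /expect exchange_big; apply: eq_bigr => t _.
rewrite exchange_big; apply: eq_bigr => s _.
rewrite /class_slack mulr_sumr [RHS](reindex_inj (@perm_inj _ t)) /= [RHS]big_mkcond.
by apply: eq_bigr => i _; case: ifP.
Qed.

Hypothesis scheme : binary_scheme sig phi.

Lemma jointP_ge0 t s : 0 <= jointP phi t s.
Proof. by case: scheme => _ [_ [phi_ge0 _]]; rewrite divr_ge0. Qed.

Lemma sum_jointP :
  \sum_(t : {perm 'I_n}) \sum_(s : {ffun 'I_n -> 'I_2}) jointP phi t s = 1.
Proof.
case: scheme => _ [_ [_ phi_sum1]].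
rewrite /jointP; under eq_bigr => t _ do rewrite -mulr_suml phi_sum1 mul1r.
rewrite sumr_const -[LHS]mulr_natl mulfV // pnatr_eq0 -lt0n.
by apply/card_gt0P; exists 1%g.
Qed.

Lemma prSig_ge0 i k : 0 <= prSig phi i k.
Proof. by do 2!apply: sumr_ge0 => ? _; case: ifP => // _; apply: jointP_ge0. Qed.

Lemma jointP_prSig0 i k (t : {perm 'I_n}) (s : {ffun 'I_n -> 'I_2}) :
  prSig phi i k = 0 -> s (t i) == k -> jointP phi t s = 0.
Proof.
have term_ge0 (t' : {perm 'I_n}) (s' : {ffun 'I_n -> 'I_2}) :
    0 <= if s' (t' i) == k then jointP phi t' s' else 0.
  by case: ifP => // _; apply: jointP_ge0.
move=> pr0 sk.
have inner0 :=
  psumr_eq0P (fun t' _ => sumr_ge0 _ (fun s' _ => term_ge0 t' s')) pr0 (i := t) isT.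
by have := psumr_eq0P (fun s' _ => term_ge0 t s') inner0 (i := s) isT; rewrite sk.
Qed.

Lemma Qnum_prSig0 i x k : prSig phi i k = 0 -> Qnum i x k = 0.
Proof.
move=> pr0; apply: big1 => t _; apply: big1 => s _.
by case: ifP => // sk; rewrite (jointP_prSig0 pr0 sk) mul0r.
Qed.

Lemma expect_ge c X : (forall s, c <= X s) -> c <= expect X.
Proof.
move=> cX; rewrite -[c]mulr1 -sum_jointP !mulr_sumr; apply: ler_sum => t _.
rewrite mulr_sumr; apply: ler_sum => s _.
by rewrite mulrC ler_wpM2l ?jointP_ge0.
Qed.

Lemma expect_lincomb (w l m : R) X Y Z :
  expect (fun s => w * X s - l * Y s - m * Z s) =
  w * expect X - l * expect Y - m * expect Z.
Proof.
rewrite /expect !mulr_sumr -!sumrB; apply: eq_bigr => t _.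
rewrite !mulr_sumr -!sumrB; apply: eq_bigr => s _; ring.
Qed.

Hypothesis persuasion : persuasive W sig phi.

Lemma agent_slack_ge0 i k : 0 <= agent_slack i k.
Proof.
rewrite agent_slackE; have := prSig_ge0 i k; rewrite le0r => /orP[/eqP pr0 | pr_gt0].
  by rewrite pr0 Qnum_prSig0 // subrr.
case: (persuasion pr_gt0) => + _.
by rewrite QE ler_pdivlMr // mul1r subr_ge0.
Qed.

Lemma agent_slack_le0 i k : 0 < sig k -> agent_slack i k <= 0.
Proof.
move=> sig_gt0; rewrite agent_slackE.
have := prSig_ge0 i k; rewrite le0r => /orP[/eqP pr0 | pr_gt0].
  by rewrite pr0 Qnum_prSig0 // subrr.
case: (persuasion pr_gt0) => _ [_ sig_min].
rewrite QnumD subr_le0; set p := prSig phi i k; set M := Qnum i 0 k.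
have Q_affine x : Q W sig phi i x k = x + M / p.
  by rewrite QE QnumD mulrDl mulfK ?gt_eqF.
have [M_le_p|M_gt_p] := lerP M p.
  (* [1 - M / p] is a nonnegative solution of [Q = 1], so it bounds [sig k] *)
  have x0_ge0 : 0 <= 1 - M / p by rewrite subr_ge0 ler_pdivrMr ?mul1r.
  have := sig_min _ x0_ge0; rewrite Q_affine subrK lexx => /(_ isT) sig_le.
  have := ler_wpM2r (ltW pr_gt0) sig_le.
  by rewrite mulrBl mul1r mulfVK ?gt_eqF // -/p; lra.
have := sig_min 0 (lexx 0); rewrite Q_affine add0r ler_pdivlMr // mul1r (ltW M_gt_p).
by move=> /(_ isT); rewrite leNgt sig_gt0.
Qed.

Lemma expect_class_slack_ge0 k : 0 <= expect (class_slack k).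
Proof. by rewrite -sum_agent_slack sumr_ge0 // => i _; apply: agent_slack_ge0. Qed.

Lemma expect_class_slack_le0 k : 0 < sig k -> expect (class_slack k) <= 0.
Proof. by move=> ?; rewrite -sum_agent_slack sumr_le0 // => i _; apply: agent_slack_le0. Qed.

End Persuasion.

Lemma sum_enum_rank (R : nmodType) (T : finType) (F : 'I_#|T| -> R) :
  \sum_(v < #|T|) F v = \sum_(y : T) F (enum_rank y).
Proof. by rewrite [RHS]big_enum_val; apply: eq_bigr => v _; rewrite enum_valK. Qed.

Lemma ord2_eq_other (kl kh k : 'I_2) : kl != kh -> (k == kl) = (k != kh).
Proof. by case: kl kh k => [[|[|?]] ?] [[|[|?]] ?] [[|[|?]] ?]. Qed.

Section LocalTerms.
Variables (R : realType) (lo hi w l m : R).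

Definition signal_of (b : bool) : R := if b then hi else lo.

Definition multiplier (b : bool) : R := if b then l else m.

Definition vertex_term (b : bool) (nb : R) : R :=
  w * signal_of b - multiplier b * (signal_of b - 1 + nb / 2).

Definition hub_part (b0 b1 : bool) : R :=
  vertex_term b0 (signal_of b1) + vertex_term b1 (signal_of b0).

(* The hubs' coupling to the clique vertices is charged to the clique. *)
Definition clique_part (b0 b1 : bool) (c : 'I_4 -> bool) : R :=
  \sum_(k < 4) (vertex_term (c k) (signal_of b0 + signal_of b1 +
                  (\sum_(k' < 4) signal_of (c k') - signal_of (c k)))
                - (multiplier b0 + multiplier b1) * signal_of (c k) / 2).

Lemma vertex_termD b x y :
  vertex_term b (x + y) = vertex_term b x - multiplier b * y / 2.
Proof. by rewrite /vertex_term; ring. Qed.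

End LocalTerms.

Section HubK4Graph.
Variables (R : realType) (r : nat).

Definition hubK4 := (bool + 'I_r * 'I_4)%type.

Definition hubK4_adj (y z : hubK4) : bool :=
  match y, z with
  | inl b, inl b' => b != b'
  | inr (q, k), inr (q', k') => (q == q') && (k != k')
  | _, _ => true
  end.

Lemma hubK4_adjC : symmetric hubK4_adj.
Proof. by move=> [b|[q k]] [b'|[q' k']] //=; rewrite eq_sym // (eq_sym k). Qed.

Lemma hubK4_adj_irr : irreflexive hubK4_adj.
Proof. by case=> [b|[q k]]; rewrite /= !eqxx. Qed.

Lemma card_hubK4 : #|{: hubK4}| = (2 + r * 4)%N.
Proof. by rewrite card_sum card_bool card_prod !card_ord. Qed.

Lemma sum_hubK4 (F : hubK4 -> R) :
  \sum_y F y = F (inl true) + F (inl false) + \sum_(q < r) \sum_(k < 4) F (inr (q, k)).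
Proof. by rewrite big_sumType big_bool pair_big /=; congr (_ + _); apply: eq_bigr => -[]. Qed.

Lemma sum_hubK4_adj_hub (g : hubK4 -> R) b :
  \sum_(z | hubK4_adj (inl b) z) g z =
  g (inl (~~ b)) + \sum_(q < r) \sum_(k < 4) g (inr (q, k)).
Proof. by rewrite big_mkcond sum_hubK4; case: b; rewrite /= ?add0r ?addr0. Qed.

Lemma sum_hubK4_adj_leaf (g : hubK4 -> R) q k :
  \sum_(z | hubK4_adj (inr (q, k)) z) g z =
  g (inl true) + g (inl false) + (\sum_(k' < 4) g (inr (q, k')) - g (inr (q, k))).
Proof.
rewrite big_mkcond sum_hubK4 /= (bigD1 q) //= eqxx.
rewrite [\sum_(i < r | i != q) _]big1 => [|q' /negbTE q'_neq]; last first.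
  by apply: big1 => k' _; rewrite eq_sym q'_neq.
rewrite addr0 [in RHS](bigD1 k) //= [X in _ = _ + X]addrC addKr [in RHS]big_mkcond.
by congr (_ + _); apply: eq_bigr => k' _; rewrite eq_sym.
Qed.

Definition hubK4_mx : 'M[R]_#|{: hubK4}| :=
  \matrix_(u, v)
    if u == v then 1 else if hubK4_adj (enum_val u) (enum_val v) then 2^-1 else 0.

Lemma hubK4_mx_rank y z :
  hubK4_mx (enum_rank y) (enum_rank z) =
  if y == z then 1 else if hubK4_adj y z then 2^-1 else 0.
Proof. by rewrite mxE !enum_rankK (inj_eq enum_rank_inj). Qed.

Lemma hubK4_mx_half_weight : half_weight_graph hubK4_mx.
Proof.
have half_gt0 : (0 : R) < 2^-1 by rewrite invr_gt0 ltr0n.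
have half_le1 : (2^-1 : R) <= 1 by rewrite invf_le1 ?ler1n ?ltr0n.
split; [|split; [|split]].
- by move=> u v; rewrite !mxE eq_sym hubK4_adjC.
- move=> u v; rewrite mxE; case: (u == v); first by rewrite ler01 lexx.
  by case: hubK4_adj; rewrite ?(ltW half_gt0) ?half_le1 ?lexx ?ler01.
- by move=> v; rewrite mxE eqxx.
- by move=> u v /negbTE uv; rewrite mxE uv; case: hubK4_adj; rewrite ?ltxx.
Qed.

Lemma hubK4_mx_OPT_IR : OPT_IR hubK4_mx <= 2.
Proof.
pose theta (v : 'I_#|{: hubK4}|) : R := if enum_val v is inl _ then 1 else 0.
have theta01 v : 0 <= theta v <= 1.
  by rewrite /theta; case: enum_val => _; rewrite ?lexx ?ler01.
have theta_norm : \sum_v `|theta v| = 2.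
  rewrite sum_enum_rank sum_hubK4 /theta !enum_rankK big1 ?addr0 ?normr1 //.
  by move=> q _; rewrite big1 // => k _; rewrite enum_rankK normr0.
have theta_feasible u : 1 <= \sum_v hubK4_mx u v * theta v.
  rewrite -[u]enum_valK sum_enum_rank sum_hubK4 /theta !enum_rankK !hubK4_mx_rank.
  rewrite big1 ?addr0 => [|q _]; last by rewrite big1 // => k _; rewrite enum_rankK mulr0.
  by case: (enum_val u) => [[]|[q k]] /=; lra.
apply: (ge_inf (ex_intro _ 0 _)) => [x [th [_ [_ ->]]]|]; first exact: sumr_ge0.
exists theta; split=> //; split=> //; split=> // v.
by case/andP: (theta01 v).
Qed.

End HubK4Graph.

Section ProfileValue.
Variables (R : realType) (r : nat) (lo hi w l m : R).

Local Notation signal_of := (signal_of lo hi).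
Local Notation vertex_term := (vertex_term lo hi w l m).
Local Notation hub_part := (hub_part lo hi w l m).
Local Notation clique_part := (clique_part lo hi w l m).

Definition profile_value (beta : hubK4 r -> bool) : R :=
  \sum_y vertex_term (beta y) (\sum_(z | hubK4_adj y z) signal_of (beta z)).

Lemma profile_valueE beta :
  profile_value beta =
  hub_part (beta (inl true)) (beta (inl false)) +
  \sum_(q < r) clique_part (beta (inl true)) (beta (inl false)) (fun k => beta (inr (q, k))).
Proof.
rewrite /profile_value sum_hubK4.
under [\sum_(q < r) _]eq_bigr => q _ do under eq_bigr => k _ do rewrite sum_hubK4_adj_leaf.
rewrite !sum_hubK4_adj_hub !vertex_termD /= /clique_part /hub_part.
under [in RHS]eq_bigr => q _ do rewrite sumrB -mulr_suml -mulr_sumr.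
by rewrite sumrB -mulr_suml -mulr_sumr; ring.
Qed.

Lemma profile_value_ge (h c : bool -> bool -> R) beta :
  (forall b0 b1, h b0 b1 <= hub_part b0 b1) ->
  (forall b0 b1 cs, c b0 b1 <= clique_part b0 b1 cs) ->
  h (beta (inl true)) (beta (inl false)) + r%:R * c (beta (inl true)) (beta (inl false))
  <= profile_value beta.
Proof.
move=> hub_ge clique_ge; rewrite profile_valueE lerD //.
rewrite -[r in r%:R]card_ord mulr_natl -sumr_const.
by apply: ler_sum => q _; apply: clique_ge.
Qed.

End ProfileValue.

Section LocalBounds.
Variables (R : realType) (lo hi : R).
Hypothesis lo_small : 0 <= lo <= 1/20.

Ltac unfold_parts := rewrite /hub_part /vertex_term /signal_of /multiplier /=.

Ltac expand_clique := rewrite /clique_part !big_ord_recr !big_ord0 /=; unfold_parts.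

Lemma hub_part_hi_small b0 b1 : 0 <= hi <= 1/5 -> 1 <= hub_part lo hi 0 (9/2) 1 b0 b1.
Proof. by move: lo_small => /andP[? ?] /andP[? ?]; case: b0; case: b1; unfold_parts; lra. Qed.

Lemma clique_part_hi_small b0 b1 c :
  0 <= hi <= 1/5 -> 0 <= clique_part lo hi 0 (9/2) 1 b0 b1 c.
Proof.
move: lo_small => /andP[? ?] /andP[? ?]; expand_clique.
by do 4 case: (c _); case: b0; case: b1 => /=; lra.
Qed.

Lemma hub_part_hi_mid b0 b1 :
  1/5 <= hi <= 4/5 -> 0 <= hub_part lo hi 1 (1/40) (3/5) b0 b1.
Proof. by move: lo_small => /andP[? ?] /andP[? ?]; case: b0; case: b1; unfold_parts; lra. Qed.

Lemma clique_part_hi_mid b0 b1 c :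
  1/5 <= hi <= 4/5 -> 1/4 <= clique_part lo hi 1 (1/40) (3/5) b0 b1 c.
Proof.
move: lo_small => /andP[? ?] /andP[? ?]; expand_clique.
by do 4 case: (c _); case: b0; case: b1 => /=; lra.
Qed.

Lemma hub_part_hi_large b0 b1 :
  4/5 <= hi <= 1 -> (if b0 != b1 then - 1/2 else 1) <= hub_part lo hi 0 (-5) 1 b0 b1.
Proof. by move: lo_small => /andP[? ?] /andP[? ?]; case: b0; case: b1; unfold_parts; lra. Qed.

Lemma clique_part_hi_large b0 b1 c :
  4/5 <= hi <= 1 -> (if b0 != b1 then 1 else 0) <= clique_part lo hi 0 (-5) 1 b0 b1 c.
Proof.
move: lo_small => /andP[? ?] /andP[? ?]; expand_clique.
by do 4 case: (c _); case: b0; case: b1 => /=; lra.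
Qed.

Variables (r : nat) (beta : hubK4 r -> bool).

Lemma profile_value_hi_small : 0 <= hi <= 1/5 -> 1 <= profile_value lo hi 0 (9/2) 1 beta.
Proof.
move=> hi_small.
have := @profile_value_ge R r lo hi 0 (9/2) 1 (fun _ _ => 1) (fun _ _ => 0) beta.
rewrite mulr0 addr0; apply=> *; [exact: hub_part_hi_small | exact: clique_part_hi_small].
Qed.

Lemma profile_value_hi_mid :
  1/5 <= hi <= 4/5 -> r%:R / 4 <= profile_value lo hi 1 (1/40) (3/5) beta.
Proof.
move=> hi_mid.
have := @profile_value_ge R r lo hi 1 (1/40) (3/5) (fun _ _ => 0) (fun _ _ => 1/4) beta.
rewrite add0r mulrA mulr1; apply=> *; [exact: hub_part_hi_mid | exact: clique_part_hi_mid].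
Qed.

Lemma profile_value_hi_large :
  (0 < r)%N -> 4/5 <= hi <= 1 -> 1/2 <= profile_value lo hi 0 (-5) 1 beta.
Proof.
move=> r_gt0 hi_large; have r_ge1 : 1 <= r%:R :> R by rewrite ler1n.
apply: le_trans (@profile_value_ge R r lo hi 0 (-5) 1
  (fun b0 b1 => if b0 != b1 then - 1/2 else 1) (fun b0 b1 => if b0 != b1 then 1 else 0)
  beta _ _).
- by case: (_ != _); lra.
- by move=> *; apply: hub_part_hi_large.
- by move=> *; apply: clique_part_hi_large.
Qed.

End LocalBounds.

Section SchemeProfile.
Variables (R : realType) (r : nat) (sig : 'I_2 -> R) (kl kh : 'I_2).
Hypothesis kl_kh : kl != kh.

Lemma slack_hubK4_mx s y :
  slack (hubK4_mx R r) sig s (enum_rank y) =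
  sig (s (enum_rank y)) - 1 + (\sum_(z | hubK4_adj y z) sig (s (enum_rank z))) / 2.
Proof.
rewrite /slack; congr (_ + _).
rewrite big_mkcond sum_enum_rank [in RHS]big_mkcond mulr_suml; apply: eq_bigr => z _.
rewrite (inj_eq enum_rank_inj) hubK4_mx_rank eq_sym.
have [->|_] := eqVneq y z; first by rewrite hubK4_adj_irr mul0r.
by case: hubK4_adj; rewrite ?mul0r // mulrC.
Qed.

Lemma profile_value_class_slack (w l m : R) (s : {ffun 'I_#|{: hubK4 r}| -> 'I_2}) :
  0 <= sig kl -> 0 <= sig kh ->
  w * \sum_v `|sig (s v)| - l * class_slack (hubK4_mx R r) sig kh s
    - m * class_slack (hubK4_mx R r) sig kl s =
  profile_value (sig kl) (sig kh) w l m (fun y => s (enum_rank y) == kh).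
Proof.
move=> kl_ge0 kh_ge0.
have sig_s v : sig (s v) = signal_of (sig kl) (sig kh) (s v == kh).
  rewrite /signal_of; case: ifP => [/eqP -> //|/negbT].
  by rewrite -(ord2_eq_other _ kl_kh) => /eqP ->.
rewrite /class_slack !mulr_sumr (big_mkcond (fun v => s v == kh)).
rewrite (big_mkcond (fun v => s v == kl)) -!sumrB sum_enum_rank; apply: eq_bigr => y _.
rewrite slack_hubK4_mx; under eq_bigr => z _ do rewrite sig_s.
rewrite sig_s (ord2_eq_other _ kl_kh) /vertex_term /multiplier /signal_of.
by case: (_ == kh); rewrite /= ger0_norm //; ring.
Qed.

End SchemeProfile.

Section CostLowerBound.
Variables (R : realType) (r : nat) (sig : 'I_2 -> R).
Variable phi : {perm 'I_#|{: hubK4 r}|} -> {ffun 'I_#|{: hubK4 r}| -> 'I_2} -> R.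
Hypotheses (r_ge2 : (2 <= r)%N) (scheme : binary_scheme sig phi).
Hypothesis persuasion : persuasive (hubK4_mx R r) sig phi.

Lemma cost_hubK4_ge_sorted kl kh :
  kl != kh -> sig kl < sig kh -> 1/20 * #|{: hubK4 r}|%:R <= cost sig phi.
Proof.
move=> kl_kh lt_kl_kh; case: (scheme) => _ [sig01 _].
have [kl_ge0 _] := andP (sig01 kl); have [_ kh_le1] := andP (sig01 kh).
have kh_gt0 := le_lt_trans kl_ge0 lt_kl_kh; have kh_ge0 := ltW kh_gt0.
have Ekl_ge0 := expect_class_slack_ge0 scheme persuasion kl.
have Ekh_ge0 := expect_class_slack_ge0 scheme persuasion kh.
have Ekh_le0 := expect_class_slack_le0 scheme persuasion kh_gt0.
have certificate w l m c :
    (forall beta : hubK4 r -> bool, c <= profile_value (sig kl) (sig kh) w l m beta) ->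
    c <= w * cost sig phi - l * expect phi (class_slack (hubK4_mx R r) sig kh)
         - m * expect phi (class_slack (hubK4_mx R r) sig kl).
  move=> c_le; rewrite -expect_lincomb; apply: (expect_ge scheme) => s.
  by rewrite profile_value_class_slack.
have [kl_large|kl_small] := lerP (1/20) (sig kl).
  apply: (@le_trans _ _ (#|{: hubK4 r}|%:R * sig kl)).
    by rewrite [X in _ <= X]mulrC ler_wpM2r ?ler0n.
  apply: (expect_ge scheme) => s.
  rewrite -[X in X%:R]card_ord mulr_natl -sumr_const; apply: ler_sum => v _.
  have [->|sv_kh] := eqVneq (s v) kh; first by rewrite ger0_norm ?ltW.
  by move: sv_kh; rewrite -(ord2_eq_other _ kl_kh) => /eqP ->; rewrite ger0_norm.
have lo_small : 0 <= sig kl <= 1/20 by rewrite kl_ge0 ltW.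
have [hi_small|hi_gt] := lerP (sig kh) (1/5).
  have hi_range : 0 <= sig kh <= 1/5 by rewrite kh_ge0.
  have := certificate 0 (9/2) 1 1 (fun beta => profile_value_hi_small lo_small beta hi_range).
  lra.
have [hi_large|hi_lt] := lerP (4/5) (sig kh).
  have hi_range : 4/5 <= sig kh <= 1 by rewrite hi_large.
  have r_gt0 : (0 < r)%N by apply: leq_trans r_ge2.
  have := certificate 0 (-5) 1 (1/2)
    (fun beta => profile_value_hi_large lo_small beta r_gt0 hi_range).
  lra.
have hi_range : 1/5 <= sig kh <= 4/5 by rewrite !ltW.
have := certificate 1 (1/40) (3/5) (r%:R / 4)
  (fun beta => profile_value_hi_mid lo_small beta hi_range).
have card_r : #|{: hubK4 r}|%:R = 2 + r%:R * 4 :> R by rewrite card_hubK4 natrD natrM.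
have r_ge2' : 2 <= r%:R :> R by rewrite ler_nat.
rewrite mul1r card_r; lra.
Qed.

Lemma cost_hubK4_ge : 1/20 * #|{: hubK4 r}|%:R <= cost sig phi.
Proof.
have [sig_inj _] := scheme.
have [lt01|lt10|eq01] := ltgtP (sig 0) (sig 1).
- exact: cost_hubK4_ge_sorted lt01.
- exact: cost_hubK4_ge_sorted lt10.
- by move/sig_inj: eq01.
Qed.

End CostLowerBound.

Theorem theorem8p1 (R : realType) :
  exists c : R, 0 < c /\
  exists C : R, forall N : nat, exists n : nat, (N <= n)%N /\
  exists W : 'M[R]_n,
    half_weight_graph W /\
    OPT_IR W <= C /\
    forall (sig : 'I_2 -> R) (phi : {perm 'I_n} -> {ffun 'I_n -> 'I_2} -> R),
      binary_scheme sig phi -> persuasive W sig phi ->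
      c * n%:R <= cost sig phi.
Proof.
exists (1/20); split; first lra.
exists 2 => N; exists #|{: hubK4 N.+2}|; split; first by rewrite card_hubK4; lia.
exists (hubK4_mx R N.+2); split; first exact: hubK4_mx_half_weight.
split; first exact: hubK4_mx_OPT_IR.
by move=> sig phi scheme persuasion; apply: cost_hubK4_ge.
Qed.
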